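(* In the resource theory of unital maps on a $d$-dimensional Hilbert space, with the currency $\mathcal C=\{C^k\}_{k=1}^d\cup\{\Omega\}$, $C^k=\{\Pi^k/k\}$, $\mathrm{Val}(C^k)=\log d-\log k$, $\mathrm{Val}(\Omega)=0$, the cost of any specification $V\in S^\Omega$ is $$\mathrm{Cost}(V)=\inf_{\rho\in V}\log\frac{d}{\lfloor\lambda_{\max}(\rho)^{-1}\rfloor}=\log d-\sup_{\rho\in V}\log\big\lfloor 2^{H_{\min}(\rho)}\big\rfloor.$$
   Context: $\Omega$ is the set of all density operators on a Hilbert space $\mathcal H$ of dimension $d$ with fixed orthonormal basis $\{\ket i\}_{i=1}^d$; $S^\Omega$ is the set of non-empty subsets of $\Omega$; $\Pi^k=\sum_{i=1}^k\ket i\bra i$. Allowed transformations: $f_{\mathcal E}(V)=\{\mathcal E(\rho):\rho\in V\}$ for unital CPTP maps $\mathcal E$; $V\to W$ iff some unital CPTP $\mathcal E$ has $\mathcal E(\rho)\in W$ for all $\rho\in V$. $\mathrm{Cost}(V)=\inf\{\mathrm{Val}(C):C\in\mathcal C,\ C\to V\}$. $\lambda_{\max}(\rho)$ is the largest eigenvalue of $\rho$, $H_{\min}(\rho)=-\log\lambda_{\max}(\rho)$, $\lfloor\cdot\rfloor$ is the floor function, and logarithms are base 2. *)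

From HB Require Import structures.
From mathcomp Require Import all_boot all_order all_algebra.
From Stdlib Require Import Reals ClassicalEpsilon.
Set Implicit Arguments. Unset Strict Implicit. Unset Printing Implicit Defensive.
Import Order.TTheory GRing.Theory Num.Theory.

Definition int_to_R (z : int) : R :=
  match z with Posz n => INR n | Negz n => Ropp (INR n.+1) end.

Definition rat_to_R (q : rat) : R := Rdiv (int_to_R (numq q)) (int_to_R (denq q)).

Definition log2 (x : R) : R := Rdiv (ln x) (ln 2).

(* real floor function: Int_part x = up x - 1 is the floor of x *)
Definition Rfloor (x : R) : R := IZR (Int_part x).

Definition is_lower_bound (S : R -> Prop) (m : R) : Prop := forall x, S x -> Rle m x.
Definition is_glb (S : R -> Prop) (m : R) : Prop :=
  is_lower_bound S m /\ (forall b, is_lower_bound S b -> Rle b m).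
Definition Rinf (S : R -> Prop) : R := epsilon (inhabits R0) (fun m => is_glb S m).
Definition Rsup (S : R -> Prop) : R := epsilon (inhabits R0) (fun m => is_lub S m).

Local Open Scope ring_scope.

Section Quantum.
Variable C : archiClosedFieldType.

(* real number represented by a (real) element x of C, via the Dedekind cut of rationals *)
Definition toR (x : C) : R := Rsup (fun r => exists q : rat, ratr q <= x /\ r = rat_to_R q).

Definition psdf (I : finType) (X : I -> I -> C) : Prop :=
  forall v : I -> C, 0 <= \sum_(i : I) \sum_(j : I) (v i)^* * X i j * v j.

Definition psd (d : nat) (A : 'M[C]_d) : Prop := psdf (fun i j => A i j).

Definition density (d : nat) (rho : 'M[C]_d) : Prop := psd rho /\ \tr rho = 1.

(* id_n (x) E applied to an operator on C^n (x) C^d *)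
Definition ampl (n d : nat) (E : 'M[C]_d -> 'M[C]_d)
    (X : 'I_n * 'I_d -> 'I_n * 'I_d -> C) : 'I_n * 'I_d -> 'I_n * 'I_d -> C :=
  fun p q => E (\matrix_(a, b) X (p.1, a) (q.1, b)) p.2 q.2.

Definition completely_positive (d : nat) (E : 'M[C]_d -> 'M[C]_d) : Prop :=
  forall (n : nat) (X : 'I_n * 'I_d -> 'I_n * 'I_d -> C), psdf X -> psdf (ampl E X).

Definition trace_preserving (d : nat) (E : 'M[C]_d -> 'M[C]_d) : Prop :=
  forall A : 'M[C]_d, \tr (E A) = \tr A.

Definition unital (d : nat) (E : 'M[C]_d -> 'M[C]_d) : Prop := E 1%:M = 1%:M.

Definition is_linear_map (d : nat) (E : 'M[C]_d -> 'M[C]_d) : Prop :=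
  forall (a : C) (A B : 'M[C]_d), E (a *: A + B) = a *: E A + E B.

Definition unital_CPTP (d : nat) (E : 'M[C]_d -> 'M[C]_d) : Prop :=
  is_linear_map E /\ completely_positive E /\ trace_preserving E /\ unital E.

Definition convertible (d : nat) (V W : 'M[C]_d -> Prop) : Prop :=
  exists E, unital_CPTP E /\ forall rho, V rho -> W (E rho).

Definition specification (d : nat) (V : 'M[C]_d -> Prop) : Prop :=
  (forall rho, V rho -> density rho) /\ exists rho, V rho.

(* Pi^k = sum_{i=1}^k |i><i|  (0-based indices i < k) *)
Definition Pi (d k : nat) : 'M[C]_d := \matrix_(i, j) ((i == j) && ltn i k)%:R.

(* the currency: Some i stands for C^(i+1) = {Pi^(i+1)/(i+1)}, None stands for Omega *)
Definition currency_set (d : nat) (c : option 'I_d) : 'M[C]_d -> Prop :=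
  match c with
  | Some i => fun rho => rho = (i.+1%:R)^-1 *: Pi d i.+1
  | None => fun rho => density rho
  end.

Definition Val (d : nat) (c : option 'I_d) : R :=
  match c with
  | Some i => Rminus (log2 (INR d)) (log2 (INR i.+1))
  | None => R0
  end.

Definition Cost (d : nat) (V : 'M[C]_d -> Prop) : R :=
  Rinf (fun r => exists c : option 'I_d, convertible (currency_set c) V /\ r = Val c).

Definition is_lambda_max (d : nat) (rho : 'M[C]_d) (l : C) : Prop :=
  eigenvalue rho l /\ forall a, eigenvalue rho a -> a <= l.
Definition lambda_max (d : nat) (rho : 'M[C]_d) : C :=
  epsilon (inhabits 0) (is_lambda_max rho).

Definition Hmin (d : nat) (rho : 'M[C]_d) : R := Ropp (log2 (toR (lambda_max rho))).

End Quantum.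

(* A unital positive map preserves operator inequalities [X <= a * 1]; since
   [Pi^k / k <= 1/k * 1], the image of the currency state [Pi^k / k] under a
   unital channel has largest eigenvalue at most [1/k].  Conversely, if
   [lambda_max rho <= 1/k] then [rho] is the image of [Pi^k / k] under a
   measure-and-prepare channel in the eigenbasis of [rho], whose transition
   matrix is doubly stochastic with its first [k] rows equal to the spectrum
   of [rho].  So the cheapest currency producing [rho] is [C^k] with
   [k = floor (1 / lambda_max rho)], and [1 / lambda_max rho] is
   [2 ^ H_min rho]. *)

From mathcomp Require Import all_boot all_order all_algebra.
From Stdlib Require Import Reals.
From Stdlib Require Import ClassicalEpsilon Lia Lra.
From mathcomp Require Import ring.
From mathcomp Require Import Rstruct.
From mathcomp Require Import zify.
Set Implicit Arguments. Unset Strict Implicit. Unset Printing Implicit Defensive.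
Import Order.TTheory GRing.Theory Num.Theory.

Section FiniteSums.
Local Open Scope ring_scope.

Lemma big_pairE (R : zmodType) (I J : finType) (F : I * J -> R) :
  \sum_p F p = \sum_i \sum_j F (i, j).
Proof. by rewrite pair_bigA; apply: eq_bigr => -[]. Qed.

Lemma sum_ord_ltn_if (R : nmodType) n k (a b : R) : (k <= n)%nat ->
  \sum_(i < n) (if (i < k)%nat then a else b) = a *+ k + b *+ (n - k).
Proof.
move=> kn; rewrite -(big_mkord xpredT (fun i => if (i < k)%nat then a else b)).
rewrite (@big_cat_nat _ _ _ k 0 n) //=.
rewrite (@eq_big_nat _ _ _ 0 k _ (fun _ => a)) => [|i /andP[_ ->] //].
rewrite (@eq_big_nat _ _ _ k n _ (fun _ => b)) => [|i /andP[ki _]]; last first.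
  by rewrite ltnNge ki.
by rewrite !sumr_const_nat subn0.
Qed.

End FiniteSums.

Section PositiveSemidefinite.
Local Open Scope ring_scope.
Local Open Scope sesquilinear_scope.
Variables (C : archiClosedFieldType) (d : nat).
Implicit Types (A rho : 'M[C]_d) (u v : 'cV[C]_d).

Definition qform A u v : C := (u^t* *m A *m v) 0 0.

Lemma qformE A u v : qform A u v = \sum_i \sum_j (u i 0)^* * A i j * v j 0.
Proof.
rewrite /qform mxE; under eq_bigr => j _ do rewrite mxE mulr_suml.
rewrite exchange_big; apply: eq_bigr => i _; apply: eq_bigr => j _.
by rewrite !mxE.
Qed.

Lemma psdP A : psd A <-> forall v, 0 <= qform A v v.
Proof.
split=> [psdA v | qA f]; first by rewrite qformE; exact: (psdA (fun i => v i 0)).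
have := qA (\col_i f i); rewrite qformE.
by under eq_bigr => i _ do under eq_bigr => j _ do rewrite !mxE.
Qed.

Lemma qformDl A u1 u2 v : qform A (u1 + u2) v = qform A u1 v + qform A u2 v.
Proof. by rewrite /qform linearD /= map_mxD !mulmxDl mxE. Qed.

Lemma qformDr A u v1 v2 : qform A u (v1 + v2) = qform A u v1 + qform A u v2.
Proof. by rewrite /qform mulmxDr mxE. Qed.

Lemma qformZl A a u v : qform A (a *: u) v = a^* * qform A u v.
Proof. by rewrite /qform linearZ /= map_mxZ -!scalemxAl mxE. Qed.

Lemma qformZr A a u v : qform A u (a *: v) = a * qform A u v.
Proof. by rewrite /qform -scalemxAr mxE. Qed.

Lemma qform_delta A i j : qform A (delta_mx i 0) (delta_mx j 0) = A i j.
Proof.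
rewrite qformE (bigD1 i) //= [X in _ + X]big1 ?addr0; last first.
  by move=> k /negbTE nki; apply: big1 => l _; rewrite !mxE nki conjC0 !mul0r.
rewrite (bigD1 j) //= [X in _ + X]big1 ?addr0; last first.
  by move=> k /negbTE nkj; rewrite !mxE nkj mulr0.
by rewrite !mxE !eqxx conjC1 mul1r mulr1.
Qed.

Lemma conj_eq_of_real_sesquilinear (a b c e : C) :
  a \is Num.real -> e \is Num.real ->
  (forall t, a + t * b + t^* * c + t^* * t * e \is Num.real) -> c = b^*.
Proof.
move=> /conj_Creal ra /conj_Creal re rt.
have /conj_Creal := rt 1; rewrite !rmorphD !rmorphM /= !conjC1 ra re => r1.
have /conj_Creal := rt 'i; rewrite !rmorphD !rmorphM /= conjCK conjCi ra re => ri.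
suff <- : c^* = b by rewrite conjCK.
(* [t = 1] gives [b^* + c^* = b + c] and [t = 'i] gives [c^* - b^* = b - c]. *)
have two_i : 2 * 'i != 0 :> C by rewrite mulf_neq0 ?pnatr_eq0 ?neq0Ci.
apply: (mulfI two_i).
transitivity ('i * ((a + 1 * b^* + 1 * c^* + 1 * 1 * e) - (a + 1 * b + 1 * c + 1 * 1 * e))
  + ((a + - 'i * b^* + 'i * c^* + 'i * - 'i * e) - (a + 'i * b + - 'i * c + - 'i * 'i * e))
  + 2 * 'i * b); first by ring.
by rewrite r1 ri !subrr; ring.
Qed.

Lemma psd_hermitian A : psd A -> forall i j, A j i = (A i j)^*.
Proof.
move=> /psdP psdA i j.
set ei : 'cV[C]_d := delta_mx i 0; set ej : 'cV[C]_d := delta_mx j 0.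
have realA u : qform A u u \is Num.real by apply/ger0_real/psdA.
apply: (conj_eq_of_real_sesquilinear (e := A j j) (a := A i i)).
- by rewrite -qform_delta.
- by rewrite -qform_delta.
move=> t; suff -> : A i i + t * A i j + t^* * A j i + t^* * t * A j j =
                   qform A (ei + t *: ej) (ei + t *: ej) by exact: realA.
by rewrite !qformDl !qformDr !qformZl !qformZr !qform_delta; ring.
Qed.

Lemma psd_hermsym A : psd A -> A \is hermsymmx.
Proof.
move=> /psd_hermitian hA; apply/is_hermitianmxP; rewrite expr0 scale1r.
by apply/matrixP => i j; rewrite !mxE hA.
Qed.

Lemma qform_conj A (M : 'M[C]_d) u :
  qform (M *m A *m M^t*) u u = qform A (M^t* *m u) (M^t* *m u).
Proof. by rewrite /qform trmx_mul map_mxM trmxCK !mulmxA. Qed.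

Lemma psd_conj A (M : 'M[C]_d) : psd A -> psd (M *m A *m M^t*).
Proof. by move=> /psdP psdA; apply/psdP => v; rewrite qform_conj. Qed.

Lemma qform_diag (s : 'rV[C]_d) v :
  qform (diag_mx s) v v = \sum_l s 0 l * (v l 0 * (v l 0)^*).
Proof.
rewrite qformE; apply: eq_bigr => i _.
rewrite (bigD1 i) //= big1 ?addr0 => [|k /negbTE nki]; last first.
  by rewrite mxE eq_sym nki mulr0n mulr0 mul0r.
by rewrite mxE eqxx mulr1n; ring.
Qed.

Lemma psd_diagP (s : 'rV[C]_d) : psd (diag_mx s) <-> forall l, 0 <= s 0 l.
Proof.
split=> [/psdP psds l | s_ge0].
  by have := psds (delta_mx l 0); rewrite qform_delta mxE eqxx mulr1n.
apply/psdP => v; rewrite qform_diag; apply: sumr_ge0 => l _.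
exact/mulr_ge0/mul_conjC_ge0.
Qed.

Lemma unitarymx_trC_mul (U : 'M[C]_d) : U \is unitarymx -> U^t* *m U = 1%:M.
Proof. by move=> Uu; rewrite -[U^t*]mul1mx mulmxKtV. Qed.

Lemma eigenvalue_unitary_diag (U : 'M[C]_d) (s : 'rV[C]_d) a : U \is unitarymx ->
  eigenvalue (U^t* *m diag_mx s *m U) a <-> exists l, a = s 0 l.
Proof.
move=> Uu; split=> [/eigenvalueP [v vU v_neq0] | [l ->]].
  set w := v *m U^t*.
  have ws : w *m diag_mx s = a *: w.
    by rewrite /w scalemxAl -vU !mulmxA mulmxtVK.
  have {}v_neq0 : w *m U != 0 by rewrite /w mulmxKtV.
  clearbody w; have [l wl | w0] := pickP (fun l => w 0 l != 0); last first.
    case/eqP: v_neq0; suff -> : w = 0 by rewrite mul0mx.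
    by apply/rowP => l; rewrite [RHS]mxE; move/negbFE/eqP: (w0 l).
  exists l; move/rowP: ws => /(_ l); rewrite mul_mx_diag !mxE => wsl.
  by apply: (mulIf wl); rewrite -wsl mulrC.
apply/eigenvalueP; exists ('e_l *m U).
  by rewrite !mulmxA mulmxtVK // scalemxAl -row_diag_mx rowE.
apply: contraTneq isT => eU0; have := congr1 (mulmx^~ (U^t*)) eU0.
rewrite mulmxtVK // mul0mx => /rowP /(_ l); rewrite !mxE !eqxx /= => /eqP.
by rewrite oner_eq0.
Qed.

Lemma exists_real_argmax (f : 'I_d -> C) : (0 < d)%nat ->
  (forall l, f l \is Num.real) -> exists j, forall l, f l <= f j.
Proof.
move=> d_gt0 f_real.
suff [j fj] : exists j, forall l, l \in enum 'I_d -> f l <= f j.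
  by exists j => l; apply: fj; rewrite mem_enum.
elim: (enum 'I_d) => [|x r [j fj]]; first by exists (Ordinal d_gt0).
have [fxj | fjx] := orP (real_leVge (f_real x) (f_real j)).
  by exists j => l; rewrite in_cons => /orP[/eqP-> | /fj].
by exists x => l; rewrite in_cons => /orP[/eqP-> // | /fj /le_trans]; apply.
Qed.

Lemma lambda_max_unitary_diag (U : 'M[C]_d) (s : 'rV[C]_d) j : U \is unitarymx ->
  (forall l, s 0 l <= s 0 j) -> lambda_max (U^t* *m diag_mx s *m U) = s 0 j.
Proof.
move=> Uu s_le; set rho := U^t* *m diag_mx s *m U.
have eigP a : eigenvalue rho a <-> exists l, a = s 0 l := eigenvalue_unitary_diag s a Uu.
have max_j : is_lambda_max rho (s 0 j) by split=> [|a /eigP [l ->]]; [apply/eigP; exists j|].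
have [/eigP [l lamE] le_max] : is_lambda_max rho (lambda_max rho) :=
  epsilon_spec (inhabits 0) _ (ex_intro _ _ max_j).
by apply/le_anti; rewrite {1}lamE s_le le_max //; case: max_j.
Qed.

Lemma density_spectral rho : (0 < d)%nat -> density rho ->
  exists (U : 'M[C]_d) (s : 'rV[C]_d),
  [/\ U \is unitarymx, rho = U^t* *m diag_mx s *m U,
      forall l, 0 <= s 0 l <= lambda_max rho, \sum_l s 0 l = 1 &
      exists l, lambda_max rho = s 0 l].
Proof.
move=> d_gt0 [psd_rho tr_rho]; have herm := psd_hermsym psd_rho.
set U := spectralmx rho; set s := spectral_diag rho.
have Uu : U \is unitarymx by apply: spectral_unitarymx.
have rhoE : rho = U^t* *m diag_mx s *m U.
  by rewrite -invmx_unitary //; exact/orthomx_spectralP/hermitian_normalmx.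
have s_real l : s 0 l \is Num.real.
  by have /mxOverP := hermitian_spectral_diag_real herm; apply.
have [j s_le] := exists_real_argmax d_gt0 s_real.
have lamE : lambda_max rho = s 0 j by rewrite rhoE (lambda_max_unitary_diag Uu s_le).
exists U, s; split=> //; last by exists j.
- move=> l; rewrite lamE s_le andbT; apply/(psd_diagP s).1.
  have -> : diag_mx s = U *m rho *m U^t*.
    by rewrite rhoE !mulmxA (mulmxtVK _ Uu) (unitarymxP Uu) mul1mx.
  by apply: psd_conj.
- by rewrite -tr_rho rhoE mxtrace_mulC mulmxA (unitarymxP Uu) mul1mx mxtrace_diag.
Qed.

Lemma lambda_max_bounds rho : (0 < d)%nat -> density rho ->
  d%:R^-1 <= lambda_max rho <= 1.
Proof.
move=> d_gt0 rho_dens.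
have [U [s [_ _ s_bnd s_sum [j lamE]]]] := density_spectral d_gt0 rho_dens.
have [s_ge0 s_le] : (forall l, 0 <= s 0 l) /\ (forall l, s 0 l <= s 0 j).
  by split=> l; have /andP[] := s_bnd l; rewrite lamE.
rewrite lamE -div1r ler_pdivrMr ?ltr0n //; apply/andP; split.
  rewrite -{1}s_sum; apply: le_trans (ler_sum _ (fun l _ => s_le l)) _.
  by rewrite sumr_const card_ord mulr_natr.
by rewrite -s_sum (bigD1 j) //= lerDl sumr_ge0.
Qed.

Lemma eigenvalue_le_of_psd (A : 'M[C]_d) a l :
  psd (a *: 1%:M - A) -> eigenvalue A l -> l <= a.
Proof.
move=> /psdP psdA /eigenvalueP [v vA v_neq0].
have := psdA (v^t*); rewrite /qform trmxCK mulmxBr -scalemxAr mulmx1 vA.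
rewrite -scalerBl -scalemxAl mxE pmulr_lge0 ?subr_ge0 //.
by rewrite -dotmxE dotmx_is_dotmx.
Qed.

Lemma lambda_max_le_of_psd rho a : (0 < d)%nat -> density rho ->
  psd (a *: 1%:M - rho) -> lambda_max rho <= a.
Proof.
move=> d_gt0 rho_dens psd_a; apply: eigenvalue_le_of_psd psd_a _.
have [U [s [Uu -> _ _ [l lamE]]]] := density_spectral d_gt0 rho_dens.
by apply/eigenvalue_unitary_diag => //; exists l.
Qed.

End PositiveSemidefinite.

Section CompletelyPositive.
Local Open Scope ring_scope.
Local Open Scope sesquilinear_scope.
Variables (C : archiClosedFieldType) (d : nat).

Lemma psdf_ext (I : finType) (X Y : I -> I -> C) :
  (forall p q, X p q = Y p q) -> psdf Y -> psdf X.
Proof.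
move=> XY psdY v; have := psdY v.
by under eq_bigr => i _ do under eq_bigr => j _ do rewrite -XY.
Qed.

Lemma psdf_kernel_conj (I J : finType) (X : I -> I -> C) (K : J -> I -> C) :
  psdf X -> psdf (fun j j' => \sum_i \sum_i' K j i * X i i' * (K j' i')^*).
Proof.
move=> psdX v; pose w i := \sum_j (K j i)^* * v j.
have := psdX w; congr (_ <= _); rewrite /w.
under eq_bigr => i _ do under eq_bigr => i' _ do
  rewrite rmorph_sum /= mulr_suml mulr_sumr.
under [RHS]eq_bigr => j _ do under eq_bigr => j' _ do rewrite mulr_sumr mulr_suml.
under eq_bigr => i _ do under eq_bigr => i' _ do under eq_bigr => j' _ do
  rewrite mulr_suml.
under [RHS]eq_bigr => j _ do under eq_bigr => j' _ do under eq_bigr => i _ do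
  rewrite mulr_sumr mulr_suml.
under eq_bigr => i _ do under eq_bigr => i' _ do rewrite exchange_big.
under eq_bigr => i _ do rewrite exchange_big.
rewrite exchange_big.
under eq_bigr => j _ do under eq_bigr => i _ do rewrite exchange_big.
under eq_bigr => j _ do rewrite exchange_big.
apply: eq_bigr => j _; apply: eq_bigr => j' _; apply: eq_bigr => i _.
apply: eq_bigr => i' _; rewrite !rmorphM /= conjCK; ring.
Qed.

Lemma completely_positive_conj (K : 'M[C]_d) :
  completely_positive (fun X => K *m X *m K^t*).
Proof.
move=> n Y psdY.
pose Kt (p a : 'I_n * 'I_d) := (a.1 == p.1)%:R * K p.2 a.2.
apply: (psdf_ext _ (psdf_kernel_conj Kt psdY)) => p q.
have inner a : \sum_b Y a b * (Kt q b)^* = \sum_b2 Y a (q.1, b2) * (K q.2 b2)^*.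
  rewrite big_pairE (big_only1 q.1) => [|//|b1 /negbTE b1q _].
    by apply: eq_bigr => b2 _; rewrite /Kt /= eqxx mul1r.
  by apply: big1 => b2 _; rewrite /Kt /= b1q mul0r conjC0 mulr0.
under [RHS]eq_bigr => a _ do
  rewrite -(eq_bigr _ (fun b _ => mulrA _ _ _)) -mulr_sumr inner.
rewrite big_pairE (big_only1 p.1) => [|//|a1 /negbTE a1p _]; last first.
  by apply: big1 => a2 _; rewrite /Kt /= a1p !mul0r.
rewrite /ampl !mxE /Kt /= eqxx.
under eq_bigr => b _ do rewrite !mxE mulr_suml.
rewrite exchange_big /=; apply: eq_bigr => a _.
rewrite mul1r mulr_sumr; apply: eq_bigr => b _.
by rewrite !mxE; ring.
Qed.

Lemma completely_positive_sum (I : finType) (w : I -> C)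
    (F : I -> 'M[C]_d -> 'M[C]_d) :
  (forall i, 0 <= w i) -> (forall i, completely_positive (F i)) ->
  completely_positive (fun X => \sum_i w i *: F i X).
Proof.
move=> w_ge0 cpF n Y psdY v.
have : 0 <= \sum_i w i * (\sum_p \sum_q (v p)^* * ampl (F i) Y p q * v q).
  by apply: sumr_ge0 => i _; apply: mulr_ge0 => //; apply: cpF.
congr (_ <= _).
under eq_bigr => i _ do rewrite mulr_sumr.
rewrite exchange_big; apply: eq_bigr => p _.
under eq_bigr => i _ do rewrite mulr_sumr.
rewrite exchange_big; apply: eq_bigr => q _.
rewrite /ampl summxE mulr_sumr mulr_suml; apply: eq_bigr => i _.
by rewrite mxE; ring.
Qed.

Lemma completely_positive_psd (E : 'M[C]_d -> 'M[C]_d) :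
  completely_positive E -> forall A, psd A -> psd (E A).
Proof.
move=> cpE A psdA.
pose X : 'I_1 * 'I_d -> 'I_1 * 'I_d -> C := fun p q => A p.2 q.2.
have psdX : psdf X.
  move=> v; have := psdA (fun i => v (ord0, i)); congr (_ <= _).
  rewrite big_pairE big_ord1; apply: eq_bigr => i _.
  by rewrite big_pairE big_ord1.
move=> f; have := cpE 1 X psdX (fun p => f p.2); congr (_ <= _).
rewrite big_pairE big_ord1; apply: eq_bigr => i _.
rewrite big_pairE big_ord1; apply: eq_bigr => j _.
rewrite /ampl /X /=; congr (_ * _ * _); congr (E _ _ _).
by apply/matrixP => a b; rewrite mxE.
Qed.

End CompletelyPositive.

Section MeasurePrepare.
Local Open Scope ring_scope.
Local Open Scope sesquilinear_scope.
Variables (C : archiClosedFieldType) (d : nat) (U : 'M[C]_d) (c : 'I_d -> 'I_d -> C).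

(* Measure in the standard basis and, on outcome [i], prepare the pure state
   [U^t* e_l] with probability [c i l]. *)
Definition measure_prepare (X : 'M[C]_d) : 'M[C]_d :=
  U^t* *m diag_mx (\row_l \sum_i c i l * X i i) *m U.

Lemma delta_mx_conj (X : 'M[C]_d) (i l : 'I_d) :
  delta_mx l i *m X *m delta_mx i l = X i i *: delta_mx l l.
Proof.
rewrite -(mul_delta_mx (0 : 'I_1) l i) -(mul_delta_mx (0 : 'I_1) i l).
set li : 'M[C]_(d, 1) := delta_mx l 0; set il : 'M[C]_(1, d) := delta_mx 0 l.
rewrite !mulmxA -2!(mulmxA li).
rewrite [_ *m delta_mx i 0]mx11_scalar -rowE -colE !mxE.
by rewrite mul_mx_scalar -scalemxAl mul_delta_mx.
Qed.

Lemma trmxC_delta (i j : 'I_d) : (delta_mx i j : 'M[C]_d)^t* = delta_mx j i.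
Proof. by apply/matrixP => a b; rewrite !mxE conjC_nat andbC. Qed.

Lemma measure_prepare_kraus X : measure_prepare X =
  \sum_p c p.1 p.2 *: ((U^t* *m delta_mx p.2 p.1) *m X *m (U^t* *m delta_mx p.2 p.1)^t*).
Proof.
rewrite /measure_prepare diag_mx_sum_delta mulmx_sumr mulmx_suml big_pairE exchange_big.
apply: eq_bigr => l _; rewrite mxE scaler_suml mulmx_sumr mulmx_suml.
apply: eq_bigr => i _; rewrite trmx_mul map_mxM trmxCK trmxC_delta.
by rewrite -scalerA -delta_mx_conj -scalemxAr -scalemxAl !mulmxA.
Qed.

Lemma measure_prepare_linear : is_linear_map measure_prepare.
Proof.
move=> a A B; rewrite /measure_prepare.
have -> : \row_l \sum_i c i l * (a *: A + B) i i =
    a *: (\row_l \sum_i c i l * A i i) + \row_l \sum_i c i l * B i i.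
  apply/rowP => l; rewrite !mxE mulr_sumr -big_split /=; apply: eq_bigr => i _.
  by rewrite !mxE; ring.
by rewrite linearD linearZ /= mulmxDr mulmxDl -scalemxAr -scalemxAl.
Qed.

Lemma measure_prepare_cp : (forall i l, 0 <= c i l) -> completely_positive measure_prepare.
Proof.
move=> c_ge0 n X psdX.
have := completely_positive_sum (fun p => c_ge0 p.1 p.2)
  (fun p => completely_positive_conj (U^t* *m delta_mx p.2 p.1)) psdX.
by apply: psdf_ext => p q; rewrite /ampl measure_prepare_kraus.
Qed.

Hypothesis U_unitary : U \is unitarymx.

Lemma measure_prepare_tp : (forall i, \sum_l c i l = 1) -> trace_preserving measure_prepare.
Proof.
move=> c_row A; rewrite /measure_prepare mxtrace_mulC mulmxA (unitarymxP U_unitary).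
rewrite mul1mx mxtrace_diag; under eq_bigr => l _ do rewrite mxE.
by rewrite exchange_big; apply: eq_bigr => i _; rewrite -mulr_suml c_row mul1r.
Qed.

Lemma measure_prepare_unital : (forall l, \sum_i c i l = 1) -> unital measure_prepare.
Proof.
move=> c_col; rewrite /unital /measure_prepare.
have -> : \row_l \sum_i c i l * (1%:M : 'M[C]_d) i i = const_mx 1.
  apply/rowP => l; rewrite !mxE -[RHS](c_col l); apply: eq_bigr => i _.
  by rewrite mxE eqxx mulr1.
by rewrite diag_const_mx mulmx1 unitarymx_trC_mul.
Qed.

Lemma unital_CPTP_measure_prepare : (forall i l, 0 <= c i l) ->
  (forall i, \sum_l c i l = 1) -> (forall l, \sum_i c i l = 1) ->
  unital_CPTP measure_prepare.
Proof.
move=> c_ge0 c_row c_col; split; first exact: measure_prepare_linear.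
split; first exact: measure_prepare_cp.
by split; [apply: measure_prepare_tp | apply: measure_prepare_unital].
Qed.

End MeasurePrepare.

Section StochasticCompletion.
Local Open Scope ring_scope.
Variables (R : numFieldType) (d k : nat) (s : 'I_d -> R).
Hypothesis kd : (k <= d)%nat.
Hypotheses (s_ge0 : forall l, 0 <= s l) (s_sum : \sum_l s l = 1).
Hypothesis s_le : forall l, k%:R * s l <= 1.

(* Rows [i < k] are [s]; the remaining [d - k] rows share the leftover
   column mass [1 - k s l] equally. *)
Definition stoch_completion (i l : 'I_d) : R :=
  if (i < k)%nat then s l else (1 - k%:R * s l) / (d - k)%:R.

Lemma stoch_completion_ge0 i l : 0 <= stoch_completion i l.
Proof. by rewrite /stoch_completion; case: ifP => // _; rewrite divr_ge0 ?subr_ge0. Qed.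

Lemma stoch_completion_row i : \sum_l stoch_completion i l = 1.
Proof.
rewrite /stoch_completion; case: ltnP => [//|ki].
have dk_gt0 : (0 < d - k)%nat by rewrite subn_gt0 (leq_ltn_trans ki).
rewrite -mulr_suml sumrB -mulr_sumr s_sum sumr_const card_ord mulr1.
by rewrite -natrB // mulfV // pnatr_eq0 -lt0n.
Qed.

Lemma stoch_completion_col l : \sum_i stoch_completion i l = 1.
Proof.
rewrite /stoch_completion sum_ord_ltn_if //.
have [kd'|kd'] := ltnP k d.
  rewrite -[s l *+ k]mulr_natr -[_ *+ (d - k)]mulr_natr mulfVK; last first.
    by rewrite pnatr_eq0 -lt0n subn_gt0.
  by rewrite [s l * _]mulrC addrC subrK.
(* For [k = d] the bound [k s l <= 1] is tight, as [s] sums to one. *)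
have dk : d = k by apply/eqP; rewrite eqn_leq kd kd'.
rewrite dk subnn mulr0n addr0 -[s l *+ k]mulr_natr mulrC.
have slack_ge0 l' : 0 <= 1 - k%:R * s l' by rewrite subr_ge0.
have : \sum_l' (1 - k%:R * s l') == 0.
  by rewrite sumrB -mulr_sumr s_sum sumr_const card_ord mulr1 dk subrr.
move/eqP/(psumr_eq0P (fun l' _ => slack_ge0 l')) => /(_ l isT) /eqP.
by rewrite subr_eq0 => /eqP.
Qed.

End StochasticCompletion.

Section Currency.
Local Open Scope ring_scope.
Local Open Scope sesquilinear_scope.
Variables (C : archiClosedFieldType) (d : nat).

Lemma linear_mapN (E : 'M[C]_d -> 'M[C]_d) X : is_linear_map E -> E (- X) = - E X.
Proof.
move=> lin; have E0 : E 0 = 0.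
  have := lin 1 0 0; rewrite !scale1r addr0 => E00.
  by apply: (addrI (E 0)); rewrite addr0 -E00.
by have := lin (-1) X 0; rewrite !scaleN1r !addr0 E0 addr0.
Qed.

Lemma scale_Pi (a : C) k : a *: Pi C d k = diag_mx (\row_i (a * (i < k)%:R)).
Proof.
apply/matrixP => i j; rewrite !mxE; case: eqVneq => [->|_] /=.
  by rewrite mulr1n.
by rewrite mulr0n mulr0.
Qed.

Lemma sum_ord_ltn k : (k <= d)%nat -> \sum_(i < d) (i < k)%:R = k%:R :> C.
Proof.
move=> kd; transitivity (\sum_(i < d) (if (i < k)%nat then 1 else 0 : C)).
  by apply: eq_bigr => i _; case: ltnP.
by rewrite sum_ord_ltn_if // mul0rn addr0.
Qed.

Lemma density_Pi k : (0 < k)%nat -> (k <= d)%nat -> density (k%:R^-1 *: Pi C d k).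
Proof.
move=> k_gt0 kd; rewrite scale_Pi; split.
  by apply/psd_diagP => l; rewrite mxE mulr_ge0 ?invr_ge0 ?ler0n.
rewrite mxtrace_diag; under eq_bigr => i _ do rewrite mxE.
by rewrite -mulr_sumr sum_ord_ltn // mulVf // pnatr_eq0 -lt0n.
Qed.

Lemma lambda_max_unital_image_Pi (E : 'M[C]_d -> 'M[C]_d) k :
  (0 < d)%nat -> unital_CPTP E -> (0 < k)%nat -> (k <= d)%nat ->
  density (E (k%:R^-1 *: Pi C d k)) /\ lambda_max (E (k%:R^-1 *: Pi C d k)) <= k%:R^-1.
Proof.
move=> d_gt0 [lin [cp [tp un]]] k_gt0 kd.
have [psd_Pi tr_Pi] := density_Pi k_gt0 kd.
have dens : density (E (k%:R^-1 *: Pi C d k)).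
  by split; [apply: completely_positive_psd | rewrite tp].
split=> //; apply: lambda_max_le_of_psd => //.
(* Unitality turns [Pi^k/k <= 1/k] into [E (Pi^k/k) <= 1/k]. *)
have -> : k%:R^-1 *: 1%:M - E (k%:R^-1 *: Pi C d k) =
          E (k%:R^-1 *: 1%:M - k%:R^-1 *: Pi C d k).
  by rewrite lin un (linear_mapN _ lin).
apply: completely_positive_psd => //.
have -> : k%:R^-1 *: 1%:M - k%:R^-1 *: Pi C d k =
          diag_mx (\row_i (k%:R^-1 * (1 - (i < k)%:R))).
  apply/matrixP => a b; rewrite !mxE; case: eqVneq => [->|_] /=.
    by rewrite !mulr1n mulrBr mulr1.
  by rewrite !mulr0n mulr0 subr0.
apply/psd_diagP => l; rewrite mxE mulr_ge0 ?invr_ge0 ?ler0n //.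
by case: (l < k)%nat; rewrite ?subrr ?subr0.
Qed.

Lemma unital_image_Pi_of_lambda_max_le rho k :
  (0 < d)%nat -> density rho -> (0 < k)%nat -> (k <= d)%nat ->
  lambda_max rho <= k%:R^-1 ->
  exists E, unital_CPTP E /\ E (k%:R^-1 *: Pi C d k) = rho.
Proof.
move=> d_gt0 rho_dens k_gt0 kd lam_le.
have [U [s [Uu rhoE s_bnd s_sum _]]] := density_spectral d_gt0 rho_dens.
have k_neq0 : (k%:R : C) != 0 by rewrite pnatr_eq0 -lt0n.
have s_ge0 l : 0 <= s 0 l by case/andP: (s_bnd l).
have s_le l : k%:R * s 0 l <= 1.
  rewrite -[X in _ <= X](mulfV k_neq0) ler_wpM2l ?ler0n // (le_trans _ lam_le) //.
  by case/andP: (s_bnd l).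
set c := stoch_completion k (fun l => s 0 l).
exists (measure_prepare U c); split.
  apply: unital_CPTP_measure_prepare => //.
  - exact: stoch_completion_ge0.
  - exact: stoch_completion_row.
  - exact: stoch_completion_col.
rewrite rhoE /measure_prepare; congr (_ *m diag_mx _ *m _); apply/rowP => l.
rewrite [LHS]mxE.
have -> : \sum_i c i l * (k%:R^-1 *: Pi C d k) i i =
          \sum_(i < d) (i < k)%:R * (s 0 l * k%:R^-1).
  apply: eq_bigr => i _; rewrite !mxE eqxx /c /stoch_completion /=.
  by case: (i < k)%nat; rewrite ?mulr1n ?mulr0n; ring.
by rewrite -mulr_suml sum_ord_ltn // mulrCA mulfV // mulr1.
Qed.

End Currency.

Section ToR.
Local Open Scope ring_scope.

Lemma ratr_invn (F : numFieldType) n : ratr ((n%:R : rat)^-1) = (n%:R : F)^-1.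
Proof. by rewrite fmorphV rmorph_nat. Qed.

Lemma int_to_RE z : int_to_R z = z%:~R.
Proof. by case: z => n; rewrite /int_to_R INRE // NegzE mulrNz. Qed.

Lemma rat_to_RE q : rat_to_R q = ratr q.
Proof. by rewrite /rat_to_R RdivE !int_to_RE. Qed.

Variable C : archiClosedFieldType.

Lemma toR_lub (x : C) : x \is Num.real ->
  is_lub (fun r => exists q : rat, ratr q <= x /\ r = rat_to_R q) (toR x).
Proof.
move=> x_real; set S := fun r => _.
have bnd : bound S.
  exists (ratr ((Num.floor x + 1)%:~R : rat)) => r [q [qx ->]].
  apply/RleP; rewrite rat_to_RE ler_rat -(ler_rat C) ratr_int.
  exact/(le_trans qx)/ltW/real_floorD1_gt.
have [m m_lub] : {m | is_lub S m}.
  apply: completeness bnd _; exists (rat_to_R (Num.floor x)%:~R).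
  by exists (Num.floor x)%:~R; rewrite ratr_int real_floor_le.
exact: (epsilon_spec (inhabits R0) _ (ex_intro _ m m_lub)).
Qed.

Lemma ratr_le_toR (x : C) q : x \is Num.real -> ratr q <= x -> ratr q <= toR x.
Proof.
move=> x_real qx; have [ub _] := toR_lub x_real.
by rewrite -rat_to_RE; apply/RleP/ub; exists q.
Qed.

Lemma toR_le_ratr (x : C) q : x \is Num.real -> (toR x <= ratr q) <-> (x <= ratr q).
Proof.
move=> x_real; split=> [tq | xq]; last first.
  have [_ lb] := toR_lub x_real; apply/RleP/lb => r [q' [q'x ->]].
  by apply/RleP; rewrite rat_to_RE ler_rat -(ler_rat C) (le_trans q'x).
have q_real : ratr q \is @Num.real C by apply: rpred_rat.
have [//|qx] := real_leP x_real q_real; exfalso.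
(* A rational strictly between [ratr q] and [x] would exceed [toR x]. *)
set e := x - ratr q; have e_gt0 : 0 < e by rewrite subr_gt0.
set n := Num.bound e^-1.
have n_gt : e^-1 < n%:R by apply: archi_boundP; rewrite invr_ge0 ltW.
have n_gt0 : 0 < (n%:R : C) by apply: le_lt_trans n_gt; rewrite invr_ge0 ltW.
have q'x : ratr (q + n%:R^-1) <= x.
  rewrite rmorphD /= ratr_invn ltW // -ltrBrDl.
  by rewrite -[X in _ < X]invrK ltf_pV2 ?posrE ?invr_gt0.
have := le_trans (ratr_le_toR x_real q'x) tq.
by rewrite ler_rat gerDl invr_le0 lern0 => /eqP n0; rewrite n0 ltxx in n_gt0.
Qed.

End ToR.

Section RealFacts.
Local Open Scope R_scope.

Lemma log2_le x y : 0 < x -> x <= y -> log2 x <= log2 y.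
Proof.
move=> x_gt0 xy; have ln2_gt0 : 0 < ln 2 by have := ln_lt_2; lra.
apply: Rmult_le_compat_r; first exact/Rlt_le/Rinv_0_lt_compat.
by case: (Rle_lt_or_eq_dec _ _ xy) => [/(ln_increasing _ _ x_gt0)/Rlt_le | ->] //; lra.
Qed.

Lemma log2_div x y : 0 < x -> 0 < y -> log2 (x / y) = log2 x - log2 y.
Proof.
move=> x_gt0 y_gt0; rewrite /log2 /Rdiv ln_mult ?ln_Rinv //; last first.
  exact: Rinv_0_lt_compat.
lra.
Qed.

Lemma Rfloor_inv_spec (d : nat) t : (0 < d)%nat -> / INR d <= t -> t <= 1 ->
  exists k : nat, [/\ (0 < k)%nat, (k <= d)%nat, Rfloor (/ t) = INR k, t <= / INR k &
    forall k' : nat, (0 < k')%nat -> t <= / INR k' -> (k' <= k)%nat].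
Proof.
move=> d_gt0 t_ge t_le1.
have d_pos : 0 < INR d by apply: lt_0_INR; lia.
have t_pos : 0 < t by apply: Rlt_le_trans t_ge; apply: Rinv_0_lt_compat.
have u_ge1 : 1 <= / t by rewrite -Rinv_1; apply: Rinv_le_contravar.
have u_le : / t <= INR d.
  by rewrite -[INR d]Rinv_inv; apply: Rinv_le_contravar => //; apply: Rinv_0_lt_compat.
have [z_le z_gt] := base_Int_part (/ t); set z := Int_part (/ t) in z_le z_gt.
have z_ge1 : (1 <= z)%Z.
  suff : (0 < z)%Z by lia.
  by apply: lt_IZR; lra.
have z_led : (z <= Z.of_nat d)%Z by apply: le_IZR; rewrite -INR_IZR_INZ; lra.
have kz : INR (Z.to_nat z) = IZR z by rewrite INR_IZR_INZ Znat.Z2Nat.id //; lia.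
exists (Z.to_nat z); split; [lia | lia | by rewrite /Rfloor kz | |].
  rewrite -[t]Rinv_inv kz; apply: Rinv_le_contravar; last lra.
  by have := IZR_le 1 z z_ge1; lra.
move=> k' k'_gt0 t_le'; have k'_pos : 0 < INR k' by apply: lt_0_INR; lia.
have k'_le : INR k' <= / t by rewrite -[INR k']Rinv_inv; apply: Rinv_le_contravar.
suff : (Z.of_nat k' < z + 1)%Z by lia.
by apply: lt_IZR; rewrite -INR_IZR_INZ plus_IZR; lra.
Qed.

End RealFacts.

Section StateCost.
Local Open Scope ring_scope.
Variables (C : archiClosedFieldType) (d : nat).
Hypothesis d_gt0 : (0 < d)%nat.
Implicit Types (rho : 'M[C]_d) (V : 'M[C]_d -> Prop).

Lemma toR_lambda_max_bounds rho : density rho ->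
  (lambda_max rho \is Num.real) /\
  Rle (Rinv (INR d)) (toR (lambda_max rho)) /\ Rle (toR (lambda_max rho)) R1.
Proof.
move=> rho_dens; have /andP[lam_ge lam_le1] := lambda_max_bounds d_gt0 rho_dens.
have lam_real : lambda_max rho \is Num.real.
  by apply/ger0_real/(le_trans _ lam_ge); rewrite invr_ge0 ler0n.
split=> //; split.
  by apply/RleP; rewrite RinvE INRE -(ratr_invn R) ratr_le_toR // ratr_invn.
have := (toR_le_ratr 1 lam_real).2; rewrite !rmorph1 => lam_le1'.
by apply/RleP/lam_le1'.
Qed.

Lemma floor_inv_lambda_max rho : density rho ->
  exists k : nat, [/\ (0 < k)%nat, (k <= d)%nat,
    Rfloor (Rinv (toR (lambda_max rho))) = INR k,
    lambda_max rho <= k%:R^-1 &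
    forall k' : nat, (0 < k')%nat -> lambda_max rho <= k'%:R^-1 -> (k' <= k)%nat].
Proof.
move=> rho_dens; have [lam_real [t_ge t_le1]] := toR_lambda_max_bounds rho_dens.
have toR_leP k : Rle (toR (lambda_max rho)) (Rinv (INR k)) <-> lambda_max rho <= k%:R^-1.
  by rewrite -(ratr_invn C) -toR_le_ratr // ratr_invn RinvE INRE; split=> /RleP.
have [k [k_gt0 kd fl lam_le k_max]] := Rfloor_inv_spec d_gt0 t_ge t_le1.
exists k; split=> // [|k' k'_gt0 /toR_leP]; first exact/toR_leP.
exact: k_max.
Qed.

Lemma Rpower_Hmin rho : density rho ->
  Rpower 2 (Hmin rho) = Rinv (toR (lambda_max rho)).
Proof.
move=> rho_dens; have [_ [t_ge _]] := toR_lambda_max_bounds rho_dens.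
have t_pos : Rlt R0 (toR (lambda_max rho)).
  by apply/(Rlt_le_trans _ _ _ _ t_ge)/Rinv_0_lt_compat/lt_0_INR; lia.
have ln2_neq0 : ln 2 <> R0 by have := ln_lt_2; lra.
rewrite /Rpower /Hmin /log2 /Rdiv -Ropp_mult_distr_l Rmult_assoc Rinv_l //.
by rewrite Rmult_1_r exp_Ropp exp_ln.
Qed.

Definition state_cost rho : R :=
  log2 (Rdiv (INR d) (Rfloor (Rinv (toR (lambda_max rho))))).

Lemma state_cost_floor rho (k : nat) : (0 < k)%nat ->
  Rfloor (Rinv (toR (lambda_max rho))) = INR k ->
  state_cost rho = Rminus (log2 (INR d)) (log2 (INR k)).
Proof. by move=> k_gt0 fl; rewrite /state_cost fl log2_div //; apply: lt_0_INR; lia. Qed.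

Lemma state_cost_ge0 rho : density rho -> Rle R0 (state_cost rho).
Proof.
move=> rho_dens; have [k [k_gt0 kd fl _ _]] := floor_inv_lambda_max rho_dens.
rewrite (state_cost_floor k_gt0 fl).
have : Rle (log2 (INR k)) (log2 (INR d)).
  by apply: log2_le; [apply: lt_0_INR | apply: le_INR]; lia.
lra.
Qed.

Lemma state_cost_Hmin rho : density rho ->
  state_cost rho = Rminus (log2 (INR d)) (log2 (Rfloor (Rpower 2 (Hmin rho)))).
Proof.
move=> rho_dens; have [k [k_gt0 _ fl _ _]] := floor_inv_lambda_max rho_dens.
by rewrite Rpower_Hmin // fl (state_cost_floor k_gt0 fl).
Qed.

Lemma convertible_state_cost_le_Val V c : convertible (currency_set c) V ->
  exists rho, V rho /\ Rle (state_cost rho) (Val c).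
Proof.
move=> [E [E_ucptp EV]].
have cost_le k : (0 < k)%nat -> (k <= d)%nat -> V (E (k%:R^-1 *: Pi C d k)) ->
    exists rho, V rho /\ Rle (state_cost rho) (Rminus (log2 (INR d)) (log2 (INR k))).
  move=> k_gt0 kd V_Ek; exists (E (k%:R^-1 *: Pi C d k)); split=> //.
  have [dens lam_le] := lambda_max_unital_image_Pi d_gt0 E_ucptp k_gt0 kd.
  have [k' [k'_gt0 _ fl _ k'_max]] := floor_inv_lambda_max dens.
  have : Rle (log2 (INR k)) (log2 (INR k')).
    have := k'_max _ k_gt0 lam_le => kk'.
    by apply: log2_le; [apply: lt_0_INR | apply: le_INR]; lia.
  rewrite (state_cost_floor k'_gt0 fl); lra.
case: c EV => [i|] EV; first exact: cost_le (ltn_ord i) (EV _ erefl).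
have [rho [V_rho le]] := cost_le d d_gt0 (leqnn d) (EV _ (@density_Pi C d d d_gt0 (leqnn d))).
by exists rho; split=> //=; lra.
Qed.

Lemma state_cost_attained V rho : V rho -> density rho ->
  exists c, convertible (currency_set c) V /\ state_cost rho = Val c.
Proof.
move=> V_rho rho_dens; have [k [k_gt0 kd fl lam_le _]] := floor_inv_lambda_max rho_dens.
have [E [E_ucptp E_Pi]] := unital_image_Pi_of_lambda_max_le d_gt0 rho_dens k_gt0 kd lam_le.
case: k k_gt0 kd fl lam_le E_Pi => [//|k] _ kd fl _ E_Pi.
exists (Some (Ordinal kd)); split; last exact: state_cost_floor fl.
by exists E; split=> // _ ->; rewrite E_Pi.
Qed.

End StateCost.

Section BoundsOfSets.
Local Open Scope R_scope.
Implicit Types (S T : R -> Prop).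

Lemma is_glb_Rinf S m : is_glb S m -> Rinf S = m.
Proof.
move=> m_glb; have [lb glb] := epsilon_spec (inhabits R0) (is_glb S) (ex_intro _ m m_glb).
by apply: Rle_antisym; [apply: m_glb.2 | apply: glb; case: m_glb].
Qed.

Lemma is_lub_Rsup S m : is_lub S m -> Rsup S = m.
Proof.
move=> m_lub; have [ub lub] := epsilon_spec (inhabits R0) (is_lub S) (ex_intro _ m m_lub).
by apply: Rle_antisym; [apply: lub; case: m_lub | apply: m_lub.2].
Qed.

Lemma ex_glb S : (exists x, S x) -> (exists b, is_lower_bound S b) ->
  exists m, is_glb S m.
Proof.
move=> [x Sx] [b b_lb].
(* Apply completeness to the reflection [-S]. *)
have [m [m_ub m_lub]] : {m | is_lub (fun r => S (- r)) m}.
  apply: completeness; last by exists (- x); rewrite Ropp_involutive.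
  by exists (- b) => r /b_lb; lra.
exists (- m); split=> [y Sy | b' b'_lb].
  have : - y <= m by apply: m_ub; rewrite Ropp_involutive.
  lra.
suff : m <= - b' by lra.
by apply: m_lub => r /b'_lb; lra.
Qed.

Lemma is_glb_dominated S T m : is_glb T m ->
  (forall x, S x -> exists y, T y /\ y <= x) -> (forall y, T y -> S y) -> is_glb S m.
Proof.
move=> [m_lb m_glb] S_dom T_sub; split=> [x /S_dom [y [Ty yx]] | b b_lb].
  exact: Rle_trans (m_lb _ Ty) yx.
by apply: m_glb => y /T_sub /b_lb.
Qed.

Lemma is_lub_subr_image (A : Type) (P : A -> Prop) (f g : A -> R) a m :
  (forall t, P t -> g t = a - f t) ->
  is_glb (fun r => exists t, P t /\ r = f t) m ->
  is_lub (fun r => exists t, P t /\ r = g t) (a - m).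
Proof.
move=> gE [m_lb m_glb]; split=> [_ [t [Pt ->]] | b b_ub].
  by rewrite gE //; have := m_lb _ (ex_intro _ t (conj Pt erefl)); lra.
suff : a - b <= m by lra.
apply: m_glb => _ [t [Pt ->]]; have := b_ub _ (ex_intro _ t (conj Pt erefl)).
by rewrite gE //; lra.
Qed.

End BoundsOfSets.

Theorem mainTheorem12 (C : archiClosedFieldType) (d : nat) (Hd : (0 < d)%N)
  (V : 'M[C]_d -> Prop) (HV : specification V) :
  Cost V =
    Rinf (fun r => exists rho, V rho /\
            r = log2 (Rdiv (INR d) (Rfloor (Rinv (toR (lambda_max rho)))))) /\
  Cost V =
    Rminus (log2 (INR d))
      (Rsup (fun r => exists rho, V rho /\
            r = log2 (Rfloor (Rpower 2 (Hmin rho))))).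
Proof.
have [dens [rho0 V_rho0]] := HV.
have [m m_glb] : exists m, is_glb (fun r => exists rho, V rho /\ r = state_cost rho) m.
  apply: ex_glb; first by exists (state_cost rho0), rho0.
  by exists R0 => _ [rho [V_rho ->]]; apply: state_cost_ge0 (dens _ V_rho).
have cost_glb : is_glb (fun r => exists c, convertible (currency_set c) V /\ r = Val c) m.
  apply: is_glb_dominated m_glb _ _ => [_ [c [conv ->]] | _ [rho [V_rho ->]]].
    have [rho [V_rho le]] := convertible_state_cost_le_Val Hd conv.
    by exists (state_cost rho); split=> //; exists rho.
  have [c [conv e]] := state_cost_attained Hd V_rho (dens _ V_rho).
  by exists c.
rewrite /Cost (is_glb_Rinf cost_glb); split; first exact/esym/is_glb_Rinf.
rewrite (is_lub_Rsup (is_lub_subr_image (a := log2 (INR d)) _ m_glb)); first lra.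
by move=> rho V_rho; rewrite (state_cost_Hmin Hd (dens _ V_rho)); lra.
Qed.
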